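(* Let $m\in\mathbb N$. Suppose $a>0$ is such that for every $u\in H^1(\mathbb B^2)$ with $\int_{\mathbb S^1}e^u\,p\,d\mu_{\mathbb S^1}=0$ for all $p\in\mathring{\mathcal P}_m$, $$a\int_{\mathbb B^2}|\nabla u|^2dx\ge\log\Big(\frac1{2\pi}\int_{\mathbb S^1}e^{u-\bar u}d\mu_{\mathbb S^1}\Big),\qquad\bar u=\frac1{2\pi}\int_{\mathbb S^1}u\,d\mu_{\mathbb S^1}.$$ Then $a\ge\frac{1}{4\pi(m+1)}$.
   Context: $\mathbb B^2$ is the open unit disk, $\mathbb S^1$ its boundary with arclength measure $\mu_{\mathbb S^1}$; $u$ on $\mathbb S^1$ denotes the trace. $\mathcal P_m$ denotes the polynomials on $\mathbb R^2$ of degree at most $m$, and $\mathring{\mathcal P}_m=\{p\in\mathcal P_m:\int_{\mathbb S^1}p\,d\mu_{\mathbb S^1}=0\}$. *)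

From Stdlib Require Import Reals.
From Coquelicot Require Import Coquelicot.
Open Scope R_scope.

Definition dx (u : R -> R -> R) (x y : R) : R := Derive (fun t => u t y) x.
Definition dy (u : R -> R -> R) (x y : R) : R := Derive (fun t => u x t) y.

(* u is C^1 on R^2: partial derivatives exist everywhere and are (jointly)
   continuous. Such u restrict to H^1(B^2) functions whose trace is u|_{S^1}. *)
Definition C1_plane (u : R -> R -> R) : Prop :=
  forall x y,
    ex_derive (fun t => u t y) x /\ ex_derive (fun t => u x t) y /\
    continuity_2d_pt (dx u) x y /\ continuity_2d_pt (dy u) x y.

Definition circ_int (f : R -> R -> R) : R :=
  RInt (fun t => f (cos t) (sin t)) 0 (2 * PI).

(* Integral over the open unit disk B^2 (Lebesgue measure), written as an
   iterated integral (integrands used below are continuous on the closed disk). *)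
Definition disk_int (f : R -> R -> R) : R :=
  RInt (fun x => RInt (fun y => f x y) (- sqrt (1 - x ^ 2)) (sqrt (1 - x ^ 2))) (-1) 1.

Definition dirichlet (u : R -> R -> R) : R :=
  disk_int (fun x y => (dx u x y) ^ 2 + (dy u x y) ^ 2).

Definition bmean (u : R -> R -> R) : R := / (2 * PI) * circ_int u.

Definition is_poly_deg (m : nat) (p : R -> R -> R) : Prop :=
  exists c : nat -> nat -> R, forall x y,
    p x y = sum_f_R0 (fun i => sum_f_R0 (fun j => c i j * x ^ i * y ^ j) (m - i)) m.

Definition in_P0 (m : nat) (p : R -> R -> R) : Prop :=
  is_poly_deg m p /\ circ_int p = 0.

From Stdlib Require Import Reals Lra Lia Psatz.
From Coquelicot Require Import Coquelicot.
Open Scope R_scope.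

(* Test the inequality on u_eps = eps Re (x + i y)^(m+1).  Its trace on
   the circle is eps cos ((m+1) t), so its boundary mean is 0, and e^(u_eps)
   restricted to the circle is a continuous function h invariant under the
   rotation by 2PI/(m+1) and the reflection t |-> -t.  Such an h is
   uncorrelated with every trigonometric polynomial of degree <= m, i.e.
   int h F = (mean of h) int F; in particular the moment conditions hold.
   The Dirichlet energy of u_eps is eps^2 (m+1)^2 int_{B^2} |z|^(2m) =
   eps^2 (m+1) PI, while the cubic Taylor bound for exp gives
   (1/2PI) int e^(u_eps) >= 1 + eps^2/4 - eps^3/6.  Hence
   a (m+1) PI eps^2 >= ln (1 + eps^2/4 - eps^3/6) for all small eps > 0, which
   forces a (m+1) PI >= 1/4.
   The file develops, in order: continuity and Riemann-integral tools on R;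
   integrals over a period; the averaging lemma (section Uncorrelated); the
   harmonic polynomials Re z^n, Im z^n; the disk integral of |z|^(2n) computed
   through explicit primitives; elementary inequalities and the limiting
   argument; the test functions and the theorem. *)

(* Continuity of real functions, specialised to R so that unification finds
   the Coquelicot structures. *)
Lemma continuous_mult_R (f g : R -> R) (x : R) :
  continuous f x -> continuous g x -> continuous (fun t => f t * g t) x.
Proof. exact (continuous_mult (U:=R_UniformSpace) (K:=R_AbsRing) f g x). Qed.

Lemma continuous_plus_R (f g : R -> R) (x : R) :
  continuous f x -> continuous g x -> continuous (fun t => f t + g t) x.
Proof. exact (continuous_plus (U:=R_UniformSpace) (K:=R_AbsRing) (V:=R_NormedModule) f g x). Qed.

Lemma continuous_opp_R (f : R -> R) (x : R) :
  continuous f x -> continuous (fun t => - f t) x.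
Proof. exact (continuous_opp (U:=R_UniformSpace) (K:=R_AbsRing) (V:=R_NormedModule) f x). Qed.

Lemma continuous_const_R (c x : R) : continuous (fun _ : R => c) x.
Proof. exact (continuous_const (U:=R_UniformSpace) (V:=R_UniformSpace) c x). Qed.

Lemma continuous_id_R (x : R) : continuous (fun t : R => t) x.
Proof. exact (continuous_id (U:=R_UniformSpace) x). Qed.

Lemma continuous_pow_R (f : R -> R) (x : R) (k : nat) :
  continuous f x -> continuous (fun t => f t ^ k) x.
Proof.
  intros Hf. induction k as [|k IH]; simpl.
  - apply continuous_const_R.
  - now apply continuous_mult_R.
Qed.

(* Everywhere differentiable functions are continuous; combined with
   [auto_derive] this settles the continuity of explicit smooth functions. *)
Lemma derivable_continuous_R (f : R -> R) :
  (forall t, ex_derive f t) -> forall t, continuous f t.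
Proof. intros Hf t. apply (ex_derive_continuous (K:=R_AbsRing) (V:=R_NormedModule)), Hf. Qed.

Lemma is_derive_eq (f g : R -> R) (x l1 l2 : R) :
  (forall t, f t = g t) -> l1 = l2 -> is_derive f x l1 -> is_derive g x l2.
Proof. intros Efg El Hf. subst l2. now apply (is_derive_ext f). Qed.

Lemma ex_RInt_cont (f : R -> R) a b : (forall t, continuous f t) -> ex_RInt f a b.
Proof. intros Hf. apply (ex_RInt_continuous (V:=R_CompleteNormedModule)). intros; apply Hf. Qed.

Lemma RInt_Chasles_R (f : R -> R) a b c : (forall t, continuous f t) ->
  RInt f a b + RInt f b c = RInt f a c.
Proof. intros Hf. apply (RInt_Chasles (V:=R_CompleteNormedModule)); now apply ex_RInt_cont. Qed.

Lemma RInt_swap_R (f : R -> R) a b : (forall t, continuous f t) -> RInt f b a = - RInt f a b.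
Proof.
  intros Hf. rewrite <- (opp_RInt_swap (V:=R_CompleteNormedModule)) by now apply ex_RInt_cont.
  reflexivity.
Qed.

Lemma RInt_comp_lin_R (f : R -> R) u v a b : (forall t, continuous f t) ->
  RInt (fun y => u * f (u * y + v)) a b = RInt f (u * a + v) (u * b + v).
Proof. intros Hf. apply (RInt_comp_lin (V:=R_CompleteNormedModule)). now apply ex_RInt_cont. Qed.

Lemma RInt_scal_R (f : R -> R) a b c : (forall t, continuous f t) ->
  RInt (fun y => c * f y) a b = c * RInt f a b.
Proof. intros Hf. apply (RInt_scal (V:=R_CompleteNormedModule)). now apply ex_RInt_cont. Qed.

Lemma RInt_plus_R (f g : R -> R) a b :
  (forall t, continuous f t) -> (forall t, continuous g t) ->
  RInt (fun y => f y + g y) a b = RInt f a b + RInt g a b.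
Proof. intros Hf Hg. apply (RInt_plus (V:=R_CompleteNormedModule)); now apply ex_RInt_cont. Qed.

Lemma RInt_ext_R (f g : R -> R) a b : (forall t, f t = g t) -> RInt f a b = RInt g a b.
Proof. intros Hfg. apply RInt_ext. intros; apply Hfg. Qed.

Lemma RInt_const_R (c a b : R) : RInt (fun _ => c) a b = (b - a) * c.
Proof. rewrite RInt_const. reflexivity. Qed.

(* [RInt] produces equations stated in a Coquelicot module type; [as_R_eq]
   restates them in [R] so that [ring] and [field] apply. *)
Ltac as_R_eq := match goal with |- ?a = ?b => change (@eq R a b) end.
Ltac ring_R := as_R_eq; ring.

Lemma RInt_period_shift (f : R -> R) c :
  (forall t, continuous f t) -> (forall t, f (t + 2 * PI) = f t) ->
  RInt (fun t => f (t + c)) 0 (2 * PI) = RInt f 0 (2 * PI).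
Proof.
  intros Hc Hp.
  rewrite (RInt_ext_R _ (fun y => 1 * f (1 * y + c))) by (intros; now rewrite !Rmult_1_l).
  rewrite RInt_comp_lin_R by exact Hc.
  replace (1 * 0 + c) with c by ring. replace (1 * (2 * PI) + c) with (2 * PI + c) by ring.
  assert (Htail : RInt f (2 * PI) (2 * PI + c) = RInt f 0 c).
  { transitivity (RInt (fun y => 1 * f (1 * y + 2 * PI)) 0 c).
    - rewrite RInt_comp_lin_R by exact Hc. f_equal; ring.
    - apply RInt_ext_R. intros t. rewrite !Rmult_1_l. apply Hp. }
  rewrite <- (RInt_Chasles_R f c 0 (2 * PI + c)), <- (RInt_Chasles_R f 0 (2 * PI) (2 * PI + c))
    by exact Hc.
  rewrite Htail, (RInt_swap_R f 0 c) by exact Hc. ring_R.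
Qed.

Lemma RInt_period_reflect (f : R -> R) : (forall t, continuous f t) ->
  RInt (fun t => f (2 * PI - t)) 0 (2 * PI) = RInt f 0 (2 * PI).
Proof.
  intros Hc.
  assert (Hc' : forall t, continuous (fun y => -1 * f (-1 * y + 2 * PI)) t).
  { intros t. apply continuous_mult_R; [apply continuous_const_R|].
    apply (continuous_comp (U:=R_UniformSpace) (V:=R_UniformSpace) (W:=R_UniformSpace)
             (fun y => -1 * y + 2 * PI) f).
    - apply derivable_continuous_R. intros; auto_derive; auto.
    - apply Hc. }
  rewrite (RInt_ext_R _ (fun y => -1 * (-1 * f (-1 * y + 2 * PI))))
    by (intros t; replace (-1 * t + 2 * PI) with (2 * PI - t) by ring; ring).
  rewrite RInt_scal_R, RInt_comp_lin_R by assumption.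
  replace (-1 * 0 + 2 * PI) with (2 * PI) by ring. replace (-1 * (2 * PI) + 2 * PI) with 0 by ring.
  rewrite RInt_swap_R by exact Hc. ring_R.
Qed.

Lemma RInt_cos_period (l : nat) : (1 <= l)%nat ->
  RInt (fun t => cos (INR l * t)) 0 (2 * PI) = 0.
Proof.
  intros Hl. assert (HL : 0 < INR l) by (apply lt_0_INR; lia).
  erewrite is_RInt_unique.
  2:{ apply (is_RInt_derive (fun t => sin (INR l * t) / INR l)).
      - intros x _. auto_derive; auto. field. lra.
      - intros x _. apply derivable_continuous_R. intros; auto_derive; auto. }
  replace (INR l * (2 * PI)) with (0 + 2 * INR l * PI) by ring.
  rewrite sin_period, Rmult_0_r, sin_0. unfold minus, plus, opp; simpl. field. lra.
Qed.

Lemma RInt_sin_period (l : nat) : RInt (fun t => sin (INR l * t)) 0 (2 * PI) = 0.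
Proof.
  destruct l as [|l].
  - rewrite (RInt_ext_R _ (fun _ => 0)) by (intros; rewrite Rmult_0_l; apply sin_0).
    rewrite RInt_const_R. ring_R.
  - assert (HL : 0 < INR (S l)) by (apply lt_0_INR; lia).
    set (L := INR (S l)) in *.
    erewrite is_RInt_unique.
    2:{ apply (is_RInt_derive (fun t => - cos (L * t) / L)).
        - intros x _. auto_derive; auto. field. lra.
        - intros x _. apply derivable_continuous_R. intros; auto_derive; auto. }
    replace (L * (2 * PI)) with (0 + 2 * INR (S l) * PI) by (unfold L; ring).
    rewrite cos_period, Rmult_0_r, cos_0. unfold minus, plus, opp; simpl. ring.
Qed.

Lemma cos_lt_1 x : 0 < x < 2 * PI -> cos x < 1.
Proof.
  intros Hx. replace x with (2 * (x / 2)) by field. rewrite cos_2a_sin.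
  assert (0 < sin (x / 2)) by (apply sin_gt_0; lra). nra.
Qed.

Lemma prod_to_sum (l : nat) (t : R) :
  let up := INR (S (S l)) * t in let down := INR l * t in
  cos (INR (S l) * t) * cos t = (cos up + cos down) / 2 /\
  sin (INR (S l) * t) * cos t = (sin up + sin down) / 2 /\
  cos (INR (S l) * t) * sin t = (sin up - sin down) / 2 /\
  sin (INR (S l) * t) * sin t = (cos down - cos up) / 2.
Proof.
  intros up down.
  replace up with (INR (S l) * t + t) by (unfold up; rewrite (S_INR (S l)); ring).
  replace down with (INR (S l) * t - t) by (unfold down; rewrite (S_INR l); ring).
  rewrite cos_plus, cos_minus, sin_plus, sin_minus.
  repeat split; field.
Qed.

(* A continuous function h which is invariant under the rotation by 2PI/k and
   under the reflection t |-> 2PI - t is uncorrelated, on [0, 2PI], with every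
   trigonometric polynomial of degree < k:  int h F = (mean of h) * int F. *)
Section Uncorrelated.

Variable k : nat.
Hypothesis k_pos : (1 <= k)%nat.
Variable h : R -> R.
Hypothesis h_cont : forall t, continuous h t.
Hypothesis h_rot : forall t, h (t + 2 * PI / INR k) = h t.
Hypothesis h_refl : forall t, h (2 * PI - t) = h t.

(* k rotations by 2PI/k make h 2PI-periodic. *)
Lemma h_period t : h (t + 2 * PI) = h t.
Proof.
  assert (HK : 0 < INR k) by (apply lt_0_INR; lia).
  assert (Hj : forall j, h (t + INR j * (2 * PI / INR k)) = h t).
  { induction j as [|j IH].
    - simpl. now rewrite Rmult_0_l, Rplus_0_r.
    - rewrite S_INR, <- IH, <- (h_rot (t + INR j * _)). f_equal. ring. }
  rewrite <- (Hj k). f_equal. field. lra.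
Qed.

Definition uncorrelated (F : R -> R) : Prop :=
  (forall t, continuous F t) /\
  RInt (fun t => h t * F t) 0 (2 * PI) = RInt h 0 (2 * PI) / (2 * PI) * RInt F 0 (2 * PI).

Lemma uncorrelated_ext (F G : R -> R) :
  uncorrelated F -> (forall t, F t = G t) -> uncorrelated G.
Proof.
  intros [HF EF] E. split.
  - intros t. apply (continuous_ext F); auto.
  - rewrite (RInt_ext_R (fun t => h t * G t) (fun t => h t * F t)) by (intros; now rewrite E).
    rewrite (RInt_ext_R G F) by (intros; now rewrite E). exact EF.
Qed.

Lemma uncorrelated_lin (F G : R -> R) (a b : R) :
  uncorrelated F -> uncorrelated G -> uncorrelated (fun t => a * F t + b * G t).
Proof.
  intros [HF EF] [HG EG].
  assert (HhF : forall t, continuous (fun t => h t * F t) t) by (intros; now apply continuous_mult_R).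
  assert (HhG : forall t, continuous (fun t => h t * G t) t) by (intros; now apply continuous_mult_R).
  assert (Hc : forall (c : R) (f : R -> R), (forall t, continuous f t) ->
            forall t, continuous (fun t => c * f t) t)
    by (intros; apply continuous_mult_R; auto; apply continuous_const_R).
  split.
  - intros t. apply continuous_plus_R; apply Hc; auto.
  - rewrite (RInt_ext_R _ (fun t => a * (h t * F t) + b * (h t * G t))) by (intros; ring).
    rewrite !RInt_plus_R by (apply Hc; auto).
    rewrite !RInt_scal_R, EF, EG by auto. ring_R.
Qed.

Lemma uncorrelated_zero : uncorrelated (fun _ => 0).
Proof.
  split; [intros; apply continuous_const_R|].
  rewrite (RInt_ext_R _ (fun _ => 0)) by (intros; ring).
  rewrite RInt_const_R. ring_R.
Qed.

(* Reflection symmetry: h is orthogonal to all sines. *)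
Lemma h_sin_orth (l : nat) : RInt (fun t => h t * sin (INR l * t)) 0 (2 * PI) = 0.
Proof.
  set (F := fun t => h t * sin (INR l * t)).
  assert (HF : forall t, continuous F t).
  { intros t. apply continuous_mult_R; auto.
    apply derivable_continuous_R. intros; auto_derive; auto. }
  assert (E := RInt_period_reflect F HF).
  rewrite (RInt_ext_R _ (fun t => -1 * F t)) in E.
  - rewrite RInt_scal_R in E by exact HF. fold F. lra.
  - intros t. unfold F. rewrite h_refl.
    replace (INR l * (2 * PI - t)) with (- (INR l * t) + 2 * INR l * PI) by ring.
    rewrite sin_period, sin_neg. ring.
Qed.

(* Rotation symmetry: h is orthogonal to cos(l t) for 1 <= l < k, since the
   rotation by 2PI/k turns cos(l t) into a genuinely different harmonic. *)
Lemma h_cos_orth (l : nat) : (1 <= l)%nat -> (l < k)%nat ->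
  RInt (fun t => h t * cos (INR l * t)) 0 (2 * PI) = 0.
Proof.
  intros Hl Hlk.
  assert (HK : 0 < INR k) by (apply lt_0_INR; lia).
  assert (HL : 0 < INR l) by (apply lt_0_INR; lia).
  assert (HLK : INR l < INR k) by (apply lt_INR; lia).
  set (c := 2 * PI / INR k).
  set (F := fun t => h t * cos (INR l * t)).
  set (Fs := fun t => h t * sin (INR l * t)).
  assert (Hsmooth : forall f : R -> R, (forall t, ex_derive f t) ->
            forall t, continuous (fun t => h t * f t) t)
    by (intros f Hf t; apply continuous_mult_R; auto; now apply derivable_continuous_R).
  assert (HF : forall t, continuous F t) by (apply Hsmooth; intros; auto_derive; auto).
  assert (HFs : forall t, continuous Fs t) by (apply Hsmooth; intros; auto_derive; auto).
  assert (E : RInt (fun t => F (t + c)) 0 (2 * PI) = RInt F 0 (2 * PI)).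
  { apply RInt_period_shift; auto. intros t. unfold F. rewrite h_period.
    replace (INR l * (t + 2 * PI)) with (INR l * t + 2 * INR l * PI) by ring.
    now rewrite cos_period. }
  rewrite (RInt_ext_R _ (fun t => cos (INR l * c) * F t + (- sin (INR l * c)) * Fs t)) in E.
  2:{ intros t. unfold F, Fs, c. rewrite h_rot.
      replace (INR l * (t + 2 * PI / INR k)) with (INR l * t + INR l * (2 * PI / INR k)) by ring.
      rewrite cos_plus. ring. }
  rewrite RInt_plus_R in E by (intros; apply continuous_mult_R; auto; apply continuous_const_R).
  rewrite !RInt_scal_R in E by auto.
  unfold Fs in E. rewrite h_sin_orth in E. fold F in E.
  assert (cos (INR l * c) < 1).
  { apply cos_lt_1. unfold c. pose proof PI_RGT_0.
    replace (INR l * (2 * PI / INR k)) with (2 * PI * (INR l / INR k)) by (field; lra).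
    assert (INR l / INR k < 1) by (apply Rmult_lt_reg_r with (INR k); auto; field_simplify; lra).
    assert (0 < INR l / INR k) by (apply Rdiv_lt_0_compat; lra).
    split; nra. }
  nra.
Qed.

Lemma uncorrelated_cos (l : nat) : (l < k)%nat -> uncorrelated (fun t => cos (INR l * t)).
Proof.
  intros Hl. split; [apply derivable_continuous_R; intros; auto_derive; auto|].
  destruct l as [|l].
  - rewrite (RInt_ext_R (fun t => h t * cos (INR 0 * t)) h),
            (RInt_ext_R (fun t => cos (INR 0 * t)) (fun _ => 1))
      by (intros; simpl; rewrite Rmult_0_l, cos_0; ring).
    rewrite RInt_const_R.
    assert (Hmean : forall I : R, I = I / (2 * PI) * ((2 * PI - 0) * 1))
      by (intros; pose proof PI_RGT_0; field; lra).
    apply Hmean.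
  - rewrite h_cos_orth, RInt_cos_period by lia. ring_R.
Qed.

Lemma uncorrelated_sin (l : nat) : uncorrelated (fun t => sin (INR l * t)).
Proof.
  split; [apply derivable_continuous_R; intros; auto_derive; auto|].
  rewrite h_sin_orth, RInt_sin_period. ring_R.
Qed.

Definition uncorrelated_upto (d : nat) (F : R -> R) : Prop :=
  forall l, (l <= d)%nat ->
    uncorrelated (fun t => cos (INR l * t) * F t) /\ uncorrelated (fun t => sin (INR l * t) * F t).

Lemma uncorrelated_upto_one : uncorrelated_upto (k - 1) (fun _ => 1).
Proof.
  intros l Hl. split.
  - apply (uncorrelated_ext _ _ (uncorrelated_cos l ltac:(lia))). intros; ring.
  - apply (uncorrelated_ext _ _ (uncorrelated_sin l)). intros; ring.
Qed.

(* Multiplying by cos t or sin t raises the degree by one: the product-to-sum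
   formulas express the new products through frequencies l-1 and l+1. *)
Lemma uncorrelated_upto_mul_cos (d : nat) (F : R -> R) :
  uncorrelated_upto (S d) F -> uncorrelated_upto d (fun t => cos t * F t).
Proof.
  intros HF [|l] Hl.
  - destruct (HF 1%nat ltac:(lia)) as [H1 _]. split.
    + apply (uncorrelated_ext _ _ H1). intros t. simpl. rewrite Rmult_0_l, cos_0, Rmult_1_l. ring.
    + apply (uncorrelated_ext _ _ uncorrelated_zero). intros t. simpl. rewrite Rmult_0_l, sin_0. ring.
  - destruct (HF (S (S l)) ltac:(lia)) as [Cu Su]. destruct (HF l ltac:(lia)) as [Cd Sd].
    split.
    + apply (uncorrelated_ext _ _ (uncorrelated_lin _ _ (1/2) (1/2) Cu Cd)). intros t.
      destruct (prod_to_sum l t) as [E _]. symmetry. rewrite <- Rmult_assoc, E. field.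
    + apply (uncorrelated_ext _ _ (uncorrelated_lin _ _ (1/2) (1/2) Su Sd)). intros t.
      destruct (prod_to_sum l t) as [_ [E _]]. symmetry. rewrite <- Rmult_assoc, E. field.
Qed.

Lemma uncorrelated_upto_mul_sin (d : nat) (F : R -> R) :
  uncorrelated_upto (S d) F -> uncorrelated_upto d (fun t => sin t * F t).
Proof.
  intros HF [|l] Hl.
  - destruct (HF 1%nat ltac:(lia)) as [_ H1]. split.
    + apply (uncorrelated_ext _ _ H1). intros t. simpl. rewrite Rmult_0_l, cos_0, Rmult_1_l. ring.
    + apply (uncorrelated_ext _ _ uncorrelated_zero). intros t. simpl. rewrite Rmult_0_l, sin_0. ring.
  - destruct (HF (S (S l)) ltac:(lia)) as [Cu Su]. destruct (HF l ltac:(lia)) as [Cd Sd].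
    split.
    + apply (uncorrelated_ext _ _ (uncorrelated_lin _ _ (1/2) (-1/2) Su Sd)). intros t.
      destruct (prod_to_sum l t) as [_ [_ [E _]]]. symmetry. rewrite <- Rmult_assoc, E. field.
    + apply (uncorrelated_ext _ _ (uncorrelated_lin _ _ (-1/2) (1/2) Cu Cd)). intros t.
      destruct (prod_to_sum l t) as [_ [_ [_ E]]]. symmetry. rewrite <- Rmult_assoc, E. field.
Qed.

Lemma uncorrelated_upto_ext (d : nat) (F G : R -> R) :
  uncorrelated_upto d F -> (forall t, F t = G t) -> uncorrelated_upto d G.
Proof.
  intros HF E l Hl. destruct (HF l Hl) as [Hc Hs].
  split; [apply (uncorrelated_ext _ _ Hc) | apply (uncorrelated_ext _ _ Hs)]; intros t; now rewrite E.
Qed.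

Lemma uncorrelated_upto_monomial (a b d : nat) : (a + b + d <= k - 1)%nat ->
  uncorrelated_upto d (fun t => cos t ^ a * sin t ^ b).
Proof.
  revert b d. induction a as [|a IHa]; [induction b as [|b IHb]|].
  - intros d Hd. apply (uncorrelated_upto_ext _ (fun _ => 1)).
    + intros l Hl. apply uncorrelated_upto_one. lia.
    + intros t. simpl. ring.
  - intros d Hd.
    apply (uncorrelated_upto_ext _ _ _ (uncorrelated_upto_mul_sin _ _ (IHb (S d) ltac:(lia)))).
    intros t. simpl. ring.
  - intros b d Hd.
    apply (uncorrelated_upto_ext _ _ _ (uncorrelated_upto_mul_cos _ _ (IHa b (S d) ltac:(lia)))).
    intros t. simpl. ring.
Qed.

Lemma uncorrelated_monomial (i j : nat) : (i + j < k)%nat ->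
  uncorrelated (fun t => cos t ^ i * sin t ^ j).
Proof.
  intros Hij. destruct (uncorrelated_upto_monomial i j 0 ltac:(lia) 0%nat (le_n 0)) as [A _].
  apply (uncorrelated_ext _ _ A). intros t. simpl. rewrite Rmult_0_l, cos_0. ring.
Qed.

Lemma uncorrelated_sum (F : nat -> R -> R) (N : nat) :
  (forall n, (n <= N)%nat -> uncorrelated (F n)) ->
  uncorrelated (fun t => sum_f_R0 (fun n => F n t) N).
Proof.
  induction N as [|N IH]; intros HF.
  - apply HF; lia.
  - apply (uncorrelated_ext _ _
             (uncorrelated_lin _ _ 1 1 (IH (fun n Hn => HF n ltac:(lia))) (HF (S N) ltac:(lia)))).
    intros t. simpl. ring.
Qed.

(* Restricted to the circle, a polynomial of degree <= m < k in (x, y) is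
   uncorrelated with h. *)
Lemma uncorrelated_poly (m : nat) (c : nat -> nat -> R) : (m < k)%nat ->
  uncorrelated (fun t =>
    sum_f_R0 (fun i => sum_f_R0 (fun j => c i j * cos t ^ i * sin t ^ j) (m - i)) m).
Proof.
  intros Hm.
  apply (uncorrelated_sum (fun i t => sum_f_R0 (fun j => c i j * cos t ^ i * sin t ^ j) (m - i))).
  intros i Hi. apply (uncorrelated_sum (fun j t => c i j * cos t ^ i * sin t ^ j)).
  intros j Hj. assert (A := uncorrelated_monomial i j ltac:(lia)).
  apply (uncorrelated_ext _ _ (uncorrelated_lin _ _ (c i j) 0 A A)). intros t. ring.
Qed.

End Uncorrelated.

(* re_zpow n and im_zpow n are the real and imaginary parts of (x + i y)^n,
   defined by the recursion (x + i y)^(n+1) = (x + i y) (x + i y)^n. *)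
Fixpoint re_zpow (n : nat) (x y : R) : R :=
  match n with O => 1 | S n' => x * re_zpow n' x y - y * im_zpow n' x y end
with im_zpow (n : nat) (x y : R) : R :=
  match n with O => 0 | S n' => x * im_zpow n' x y + y * re_zpow n' x y end.

Lemma zpow_circle (n : nat) (t : R) :
  re_zpow n (cos t) (sin t) = cos (INR n * t) /\ im_zpow n (cos t) (sin t) = sin (INR n * t).
Proof.
  induction n as [|n [IHre IHim]].
  - simpl. rewrite Rmult_0_l, cos_0, sin_0. auto.
  - cbn [re_zpow im_zpow]. rewrite IHre, IHim, S_INR.
    replace ((INR n + 1) * t) with (INR n * t + t) by ring.
    rewrite cos_plus, sin_plus. split; ring.
Qed.

Lemma zpow_norm (n : nat) (x y : R) : re_zpow n x y ^ 2 + im_zpow n x y ^ 2 = (x ^ 2 + y ^ 2) ^ n.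
Proof.
  induction n as [|n IH].
  - simpl. ring.
  - change ((x ^ 2 + y ^ 2) ^ S n) with ((x ^ 2 + y ^ 2) * (x ^ 2 + y ^ 2) ^ n).
    rewrite <- IH. cbn [re_zpow im_zpow]. ring.
Qed.

(* Derivative of a t * f1 t + b t * f2 t, the shape of the recursion above. *)
Lemma is_derive_lin_comb (f1 f2 a b : R -> R) (x d1 d2 da db : R) :
  is_derive f1 x d1 -> is_derive f2 x d2 -> is_derive a x da -> is_derive b x db ->
  is_derive (fun t => a t * f1 t + b t * f2 t) x (da * f1 x + a x * d1 + db * f2 x + b x * d2).
Proof.
  intros D1 D2 Da Db. auto_derive.
  - repeat split; eexists; eauto.
  - replace (Derive (fun t => f1 t) x) with d1 by (symmetry; now apply is_derive_unique).
    replace (Derive (fun t => f2 t) x) with d2 by (symmetry; now apply is_derive_unique).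
    replace (Derive (fun t => a t) x) with da by (symmetry; now apply is_derive_unique).
    replace (Derive (fun t => b t) x) with db by (symmetry; now apply is_derive_unique).
    ring.
Qed.

(* Complex differentiation of z^(n+1), written with the Cauchy-Riemann
   equations: d/dx z^(n+1) = (n+1) z^n and d/dy z^(n+1) = i (n+1) z^n. *)
Lemma zpow_dx (n : nat) (x y : R) :
  is_derive (fun t => re_zpow (S n) t y) x (INR (S n) * re_zpow n x y) /\
  is_derive (fun t => im_zpow (S n) t y) x (INR (S n) * im_zpow n x y).
Proof.
  induction n as [|n [Dre Dim]].
  - cbn [re_zpow im_zpow]. split; auto_derive; auto; simpl; ring.
  - assert (Did : is_derive (fun t : R => t) x 1) by (auto_derive; auto).
    assert (Dc : forall c : R, is_derive (fun _ : R => c) x 0) by (intros; auto_derive; auto).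
    change (INR (S (S n))) with (INR (S n) + 1).
    split.
    + eapply is_derive_eq;
        [| |exact (is_derive_lin_comb _ _ _ (fun _ => -y) _ _ _ _ _ Dre Dim Did (Dc _))].
      * intros t. cbn [re_zpow]. ring.
      * cbn [re_zpow im_zpow]. ring.
    + eapply is_derive_eq;
        [| |exact (is_derive_lin_comb _ _ _ (fun _ => y) _ _ _ _ _ Dim Dre Did (Dc _))].
      * intros t. cbn [im_zpow]. ring.
      * cbn [re_zpow im_zpow]. ring.
Qed.

Lemma zpow_dy (n : nat) (x y : R) :
  is_derive (fun t => re_zpow (S n) x t) y (- (INR (S n) * im_zpow n x y)) /\
  is_derive (fun t => im_zpow (S n) x t) y (INR (S n) * re_zpow n x y).
Proof.
  induction n as [|n [Dre Dim]].
  - cbn [re_zpow im_zpow]. split; auto_derive; auto; simpl; ring.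
  - assert (Did : is_derive (fun t : R => t) y 1) by (auto_derive; auto).
    assert (Dopp : is_derive (fun t : R => - t) y (-1)) by (auto_derive; auto).
    assert (Dc : forall c : R, is_derive (fun _ : R => c) y 0) by (intros; auto_derive; auto).
    change (INR (S (S n))) with (INR (S n) + 1).
    split.
    + eapply is_derive_eq;
        [| |exact (is_derive_lin_comb _ _ (fun _ => x) _ _ _ _ _ _ Dre Dim (Dc _) Dopp)].
      * intros t. cbn [re_zpow]. ring.
      * cbn [re_zpow im_zpow]. ring.
    + eapply is_derive_eq;
        [| |exact (is_derive_lin_comb _ _ (fun _ => x) _ _ _ _ _ _ Dim Dre (Dc _) Did)].
      * intros t. cbn [im_zpow]. ring.
      * cbn [re_zpow im_zpow]. ring.
Qed.

Lemma zpow_continuous (n : nat) (x y : R) :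
  continuity_2d_pt (re_zpow n) x y /\ continuity_2d_pt (im_zpow n) x y.
Proof.
  induction n as [|n [IHre IHim]].
  - split; apply continuity_2d_pt_const.
  - split; cbn [re_zpow im_zpow].
    + apply continuity_2d_pt_minus; apply continuity_2d_pt_mult; auto;
        [apply continuity_2d_pt_id1 | apply continuity_2d_pt_id2].
    + apply continuity_2d_pt_plus; apply continuity_2d_pt_mult; auto;
        [apply continuity_2d_pt_id1 | apply continuity_2d_pt_id2].
Qed.

(* G_n: the primitive in y, vanishing at y = 0, of (x^2 + y^2)^n; it satisfies
   (2n+3) G_(n+1) = y (x^2+y^2)^(n+1) + 2(n+1) x^2 G_n (integration by parts). *)
Fixpoint radial_prim (n : nat) (x y : R) : R :=
  match n with
  | O => y
  | S n' => (y * (x ^ 2 + y ^ 2) ^ n + 2 * INR n * x ^ 2 * radial_prim n' x y) / (2 * INR n + 1)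
  end.

Lemma odd_INR_pos (n : nat) : 0 < 2 * INR n + 1.
Proof. pose proof (pos_INR n). lra. Qed.

Lemma radial_prim_dy (n : nat) (x y : R) :
  is_derive (fun t => radial_prim n x t) y ((x ^ 2 + y ^ 2) ^ n).
Proof.
  revert y. induction n as [|n IH]; intros y.
  - simpl. auto_derive; auto.
  - cbn [radial_prim]. pose proof (odd_INR_pos (S n)).
    set (N := INR (S n)) in *.
    auto_derive.
    + eexists; apply IH.
    + replace (Derive (fun t => radial_prim n x t) y) with ((x ^ 2 + y ^ 2) ^ n)
        by (symmetry; apply is_derive_unique, IH).
      change (match n with 0%nat => 1 | S _ => INR n + 1 end) with N.
      replace (x * (x * 1) + y * (y * 1)) with (x ^ 2 + y ^ 2) by ring.
      change ((x ^ 2 + y ^ 2) ^ S n) with ((x ^ 2 + y ^ 2) * (x ^ 2 + y ^ 2) ^ n).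
      field. lra.
Qed.

(* G_n is odd in y, hence vanishes at y = 0. *)
Lemma radial_prim_odd (n : nat) (x y : R) : radial_prim n x (- y) = - radial_prim n x y.
Proof.
  induction n as [|n IH]; cbn [radial_prim]; [reflexivity|].
  rewrite IH. replace ((- y) ^ 2) with (y ^ 2) by ring.
  field. apply Rgt_not_eq, odd_INR_pos.
Qed.

Lemma radial_prim_y0 (n : nat) (x : R) : radial_prim n x 0 = 0.
Proof. pose proof (radial_prim_odd n x 0) as E. rewrite Ropp_0 in E. lra. Qed.

Lemma radial_prim_continuous (n : nat) (f1 f2 : R -> R) (x : R) :
  continuous f1 x -> continuous f2 x -> continuous (fun t => radial_prim n (f1 t) (f2 t)) x.
Proof.
  intros C1 C2. induction n as [|n IH]; cbn [radial_prim]; [exact C2|].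
  unfold Rdiv. apply continuous_mult_R; [|apply continuous_const_R]. apply continuous_plus_R.
  - apply continuous_mult_R; auto.
    apply continuous_pow_R, continuous_plus_R; now apply continuous_pow_R.
  - apply continuous_mult_R; auto.
    apply continuous_mult_R; [apply continuous_const_R | now apply continuous_pow_R].
Qed.

Lemma chord_integral (n : nat) (x : R) :
  RInt (fun y => (x ^ 2 + y ^ 2) ^ n) (- sqrt (1 - x ^ 2)) (sqrt (1 - x ^ 2))
  = 2 * radial_prim n x (sqrt (1 - x ^ 2)).
Proof.
  apply is_RInt_unique.
  replace (2 * radial_prim n x (sqrt (1 - x ^ 2)))
    with (minus (radial_prim n x (sqrt (1 - x ^ 2))) (radial_prim n x (- sqrt (1 - x ^ 2))))
    by (rewrite radial_prim_odd; unfold minus, plus, opp; simpl; ring).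
  apply (is_RInt_derive (fun y => radial_prim n x y)).
  - intros y _. apply radial_prim_dy.
  - intros y _. apply derivable_continuous_R. intros; auto_derive; auto.
Qed.

Definition circle_prim (n : nat) (t : R) : R := radial_prim n (sin t) (cos t).

Lemma circle_prim_S (n : nat) (t : R) :
  circle_prim (S n) t = (cos t + 2 * INR (S n) * sin t ^ 2 * circle_prim n t) / (2 * INR (S n) + 1).
Proof.
  unfold circle_prim. cbn [radial_prim].
  replace (sin t ^ 2 + cos t ^ 2) with 1 by (rewrite <- (sin2_cos2 t); unfold Rsqr; ring).
  now rewrite pow1, Rmult_1_r.
Qed.

(* At the poles t = +-PI/2 we have y = cos t = 0, so g_n vanishes. *)
Lemma circle_prim_poles (n : nat) : circle_prim n (PI / 2) = 0 /\ circle_prim n (- (PI / 2)) = 0.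
Proof. unfold circle_prim. rewrite cos_neg, cos_PI2. split; apply radial_prim_y0. Qed.

(* Polynomial identities in sin t and cos t are checked modulo sin^2 + cos^2 = 1
   by eliminating the even powers of sin t. *)
Ltac trig_ring t :=
  let H2 := fresh in let H3 := fresh in let H4 := fresh in
  assert (H2 : sin t ^ 2 = 1 - cos t ^ 2)
    by (rewrite <- (sin2_cos2 t); unfold Rsqr; ring);
  assert (H3 : sin t ^ 3 = sin t - sin t * cos t ^ 2)
    by (replace (sin t ^ 3) with (sin t * sin t ^ 2) by ring; rewrite H2; ring);
  assert (H4 : sin t ^ 4 = (1 - cos t ^ 2) ^ 2)
    by (replace (sin t ^ 4) with ((sin t ^ 2) ^ 2) by ring; rewrite H2; ring);
  ring_simplify; try rewrite H4; try rewrite H3; try rewrite H2; ring.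

Lemma circle_prim_deriv (n : nat) (t : R) :
  is_derive (fun t => sin t * circle_prim n t) t (2 * (INR n + 1) * cos t * circle_prim n t - 1).
Proof.
  revert t. induction n as [|n IH]; intros t.
  - unfold circle_prim. simpl. auto_derive; auto. trig_ring t.
  - pose proof (odd_INR_pos (S n)) as Hpos.
    set (w := fun t => sin t * circle_prim n t) in IH.
    set (N := INR (S n)) in *.
    eapply (is_derive_eq (fun t => (sin t * cos t + 2 * N * sin t ^ 2 * w t) / (2 * N + 1)));
      [| reflexivity |].
    { intros s. unfold w, N. rewrite circle_prim_S, S_INR. pose proof (pos_INR n). field. lra. }
    auto_derive.
    + eexists; apply IH.
    + replace (Derive (fun t => w t) t) with (2 * (INR n + 1) * cos t * circle_prim n t - 1)
        by (symmetry; apply is_derive_unique, IH).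
      unfold w, N. rewrite circle_prim_S, !S_INR. pose proof (pos_INR n).
      field_simplify_eq; [trig_ring t | lra].
Qed.

Lemma circle_prim_continuous (n : nat) (t : R) : continuous (circle_prim n) t.
Proof. apply radial_prim_continuous; [apply continuous_sin | apply continuous_cos]. Qed.

(* By the key identity, t |-> (sin t * g_n t + t) / (n+1) is a primitive of
   2 cos t * g_n t, and g_n vanishes at the poles t = +-PI/2. *)
Lemma circle_prim_integral (n : nat) :
  is_RInt (fun t => 2 * cos t * circle_prim n t) (- (PI / 2)) (PI / 2) (PI / (INR n + 1)).
Proof.
  pose proof (pos_INR n) as Hn.
  set (F := fun t => / (INR n + 1) * (sin t * circle_prim n t + t)).
  replace (PI / (INR n + 1)) with (minus (F (PI / 2)) (F (- (PI / 2)))).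
  2:{ unfold F. destruct (circle_prim_poles n) as [Eup Edown]. rewrite Eup, Edown.
      unfold minus, plus, opp; simpl. field. lra. }
  apply (is_RInt_derive F).
  - intros t _.
    apply (is_derive_eq F F t
             (/ (INR n + 1) * ((2 * (INR n + 1) * cos t * circle_prim n t - 1) + 1)));
      [reflexivity | field; lra |].
    apply (is_derive_scal (fun t => sin t * circle_prim n t + t)).
    apply (is_derive_plus (fun t => sin t * circle_prim n t) (fun t => t)).
    + apply circle_prim_deriv.
    + apply (is_derive_id (K:=R_AbsRing)).
  - intros t _. apply continuous_mult_R; [|apply circle_prim_continuous].
    apply derivable_continuous_R. intros; auto_derive; auto.
Qed.

(* int_{B^2} c |z|^(2n) = c PI / (n+1): integrate along the vertical chords,
   then substitute x = sin t on [-PI/2, PI/2], where sqrt (1 - x^2) = cos t. *)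
Lemma disk_int_radial_pow (c : R) (n : nat) :
  disk_int (fun x y => c * (x ^ 2 + y ^ 2) ^ n) = c * PI / (INR n + 1).
Proof.
  pose proof PI_RGT_0 as Hpi.
  set (f := fun x => c * (2 * radial_prim n x (sqrt (1 - x ^ 2)))).
  unfold disk_int. rewrite (RInt_ext_R _ f).
  2:{ intros x. rewrite RInt_scal_R, chord_integral; [reflexivity|].
      apply derivable_continuous_R. intros; auto_derive; auto. }
  assert (Hf : forall x, continuous f x).
  { intros x. apply continuous_mult_R; [apply continuous_const_R|].
    apply continuous_mult_R; [apply continuous_const_R|].
    apply radial_prim_continuous; [apply continuous_id_R|].
    apply continuous_sqrt_comp, continuous_plus_R;
      [apply continuous_const_R | apply continuous_opp_R, continuous_pow_R, continuous_id_R]. }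
  assert (Hsubst := is_RInt_comp f sin cos (- (PI / 2)) (PI / 2)
                      (fun x _ => Hf (sin x)) (fun x _ => conj (is_derive_sin x) (continuous_cos x))).
  rewrite sin_neg, sin_PI2 in Hsubst. replace (- (1)) with (-1) in Hsubst by ring.
  rewrite <- (is_RInt_unique _ _ _ _ Hsubst).
  replace (c * PI / (INR n + 1)) with (scal c (PI / (INR n + 1)))
    by (unfold scal; simpl; unfold mult; simpl; field; pose proof (pos_INR n); lra).
  apply is_RInt_unique, (is_RInt_ext (fun t => scal c (2 * cos t * circle_prim n t)));
    [|apply (is_RInt_scal (V:=R_NormedModule)), circle_prim_integral].
  intros t Ht. rewrite Rmin_left, Rmax_right in Ht by lra.
  unfold scal, f; simpl; unfold mult; simpl.
  replace (1 - sin t * (sin t * 1)) with (cos t ^ 2)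
    by (pose proof (sin2_cos2 t); unfold Rsqr in *; nra).
  rewrite sqrt_pow2 by (apply cos_ge_0; lra).
  unfold circle_prim. ring.
Qed.

Lemma disk_int_ext (f g : R -> R -> R) : (forall x y, f x y = g x y) -> disk_int f = disk_int g.
Proof.
  intros Hfg. unfold disk_int. apply RInt_ext_R. intros x. apply RInt_ext_R. intros y. apply Hfg.
Qed.

Lemma mvt_from_zero (f df : R -> R) (x : R) : (forall t, is_derive f t (df t)) ->
  exists c, (0 <= x -> 0 <= c <= x) /\ (x <= 0 -> x <= c <= 0) /\ f x = f 0 + df c * x.
Proof.
  intros Hd.
  destruct (MVT_gen f 0 x df) as [c [Hc E]].
  - intros t _. apply Hd.
  - intros t _. apply derivable_continuous_pt. exists (df t). apply is_derive_Reals, Hd.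
  - exists c. unfold Rmin, Rmax in Hc. destruct (Rle_dec 0 x); repeat split; lra.
Qed.

Lemma sign_of_increasing (f df : R -> R) (x : R) :
  f 0 = 0 -> (forall t, is_derive f t (df t)) -> (forall t, 0 <= df t) ->
  (0 <= x -> 0 <= f x) /\ (x <= 0 -> f x <= 0).
Proof.
  intros H0 Hd Hpos. destruct (mvt_from_zero f df x Hd) as [c [_ [_ E]]].
  specialize (Hpos c). split; intros; nra.
Qed.

Lemma nonneg_of_sign_derivative (f df : R -> R) (x : R) :
  f 0 = 0 -> (forall t, is_derive f t (df t)) ->
  (forall t, (0 <= t -> 0 <= df t) /\ (t <= 0 -> df t <= 0)) -> 0 <= f x.
Proof.
  intros H0 Hd Hsign. destruct (mvt_from_zero f df x Hd) as [c [Hp [Hn E]]].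
  destruct (Hsign c) as [Sp Sn]. destruct (Rle_dec 0 x) as [Hx | Hx].
  - specialize (Hp Hx). specialize (Sp (proj1 Hp)). nra.
  - specialize (Hn ltac:(lra)). specialize (Sn (proj2 Hn)). nra.
Qed.

Lemma exp_cubic_lower (x : R) : 1 + x + x ^ 2 / 2 + x ^ 3 / 6 <= exp x.
Proof.
  assert (Hquad : forall t, (0 <= t -> 0 <= exp t - 1 - t - t ^ 2 / 2) /\
                            (t <= 0 -> exp t - 1 - t - t ^ 2 / 2 <= 0)).
  { intros t.
    apply (sign_of_increasing (fun s => exp s - 1 - s - s ^ 2 / 2) (fun s => exp s - 1 - s)).
    - cbv beta. rewrite exp_0. field.
    - intros s. auto_derive; auto. field.
    - intros s. pose proof (exp_ineq1_le s). lra. }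
  assert (Hcubic : 0 <= exp x - 1 - x - x ^ 2 / 2 - x ^ 3 / 6).
  { apply (nonneg_of_sign_derivative (fun s => exp s - 1 - s - s ^ 2 / 2 - s ^ 3 / 6)
             (fun s => exp s - 1 - s - s ^ 2 / 2)).
    - cbv beta. rewrite exp_0. field.
    - intros s. auto_derive; auto. field.
    - exact Hquad. }
  lra.
Qed.

Lemma ln_lower (x : R) : 0 < x -> 1 - / x <= ln x.
Proof.
  intros Hx. pose proof (exp_ineq1_le (- ln x)) as H.
  rewrite exp_Ropp, exp_ln in H by exact Hx. lra.
Qed.

(* The limiting argument: if q eps^2 >= ln (1 + eps^2/4 - eps^3/6) for all
   small eps > 0, then q >= 1/4 (compare the eps^2 coefficients). *)
Lemma quarter_of_small_eps (q : R) :
  (forall eps, 0 < eps <= 1 / 2 -> q * eps ^ 2 >= ln (1 + eps ^ 2 / 4 - eps ^ 3 / 6)) ->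
  q >= 1 / 4.
Proof.
  intros H. apply Rnot_lt_ge. intros Hq.
  set (eps := Rmin (1 / 2) (1 / 4 - q)).
  assert (He : 0 < eps <= 1 / 2 /\ eps <= 1 / 4 - q)
    by (unfold eps, Rmin; destruct (Rle_dec (1 / 2) (1 / 4 - q)); lra).
  destruct He as [He Hed].
  clearbody eps. specialize (H eps He).
  set (y := eps ^ 2 / 4 - eps ^ 3 / 6).
  replace (1 + eps ^ 2 / 4 - eps ^ 3 / 6) with (1 + y) in H by (unfold y; ring).
  assert (Hy : eps ^ 2 / 6 <= y <= eps ^ 2 / 4) by (unfold y; nra).
  pose proof (ln_lower (1 + y) ltac:(nra)) as Hln.
  (* q eps^2 (1 + y) >= y, hence q (1 + y) >= 1/4 - eps/6 ... *)
  assert (Hmain : y <= q * eps ^ 2 * (1 + y)).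
  { replace y with ((1 - / (1 + y)) * (1 + y)) at 1 by (field; lra).
    apply Rmult_le_compat_r; lra. }
  assert (Hcoef : 1 / 4 - eps / 6 <= q * (1 + y)).
  { assert (Ey : y = eps ^ 2 * (1 / 4 - eps / 6)) by (unfold y; field).
    apply Rmult_le_reg_l with (eps ^ 2); nra. }
  (* ... which fails for eps <= 1/4 - q, since then q y <= eps / 32. *)
  destruct (Rle_dec q 0) as [Hq0 | Hq0].
  - nra.
  - assert (q * y <= eps / 32) by nra. nra.
Qed.

(* (1/2PI) int_0^2PI exp (eps cos (k t)) dt >= 1 + eps^2/4 - eps^3/6, from the
   cubic Taylor bound and the mean 1/2 of cos^2 (k t). *)
Lemma RInt_exp_cos_lower (k : nat) (eps : R) : (1 <= k)%nat -> 0 <= eps ->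
  2 * PI * (1 + eps ^ 2 / 4 - eps ^ 3 / 6)
  <= RInt (fun t => exp (eps * cos (INR k * t))) 0 (2 * PI).
Proof.
  intros Hk He. pose proof PI_RGT_0 as Hpi.
  set (low := fun t => (1 - eps ^ 3 / 6 + eps ^ 2 / 4)
                       + (eps * cos (INR k * t) + eps ^ 2 / 4 * cos (INR (2 * k) * t))).
  assert (Hlow : RInt low 0 (2 * PI) = 2 * PI * (1 + eps ^ 2 / 4 - eps ^ 3 / 6)).
  { unfold low. rewrite !RInt_plus_R, !RInt_scal_R, !RInt_const_R, !RInt_cos_period by
      (lia || (apply derivable_continuous_R; intros; auto_derive; auto)).
    as_R_eq. field. }
  rewrite <- Hlow.
  apply RInt_le; [lra | | |];
    [apply ex_RInt_cont, derivable_continuous_R; intros; unfold low; auto_derive; auto ..|].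
  intros t _. unfold low.
  rewrite mult_INR. replace (INR 2 * INR k * t) with (2 * (INR k * t)) by (simpl; ring).
  rewrite cos_2a_cos.
  set (c := cos (INR k * t)).
  assert (Hc : -1 <= c <= 1) by apply COS_bound.
  pose proof (exp_cubic_lower (eps * c)).
  assert (Hcube : 0 <= (eps * c) ^ 3 + eps ^ 3).
  { replace ((eps * c) ^ 3 + eps ^ 3)
      with ((eps * c + eps) * ((eps * c - eps / 2) ^ 2 + 3 * eps ^ 2 / 4)) by field.
    apply Rmult_le_pos; nra. }
  nra.
Qed.

(* exp (eps cos (k t)) has the rotation and reflection symmetries required by
   the averaging lemma, so on the circle it is uncorrelated with every
   polynomial of degree < k. *)
Lemma exp_cos_uncorrelated (eps : R) (k m : nat) (p : R -> R -> R) :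
  (m < k)%nat -> is_poly_deg m p ->
  uncorrelated (fun t => exp (eps * cos (INR k * t))) (fun t => p (cos t) (sin t)).
Proof.
  intros Hm [c Hc]. assert (HK : 0 < INR k) by (apply lt_0_INR; lia).
  apply (uncorrelated_ext _
           (fun t => sum_f_R0 (fun i => sum_f_R0 (fun j => c i j * cos t ^ i * sin t ^ j) (m - i)) m));
    [|intros; now rewrite Hc].
  apply (uncorrelated_poly k); [lia | | | | exact Hm].
  - apply derivable_continuous_R. intros; auto_derive; auto.
  - intros t. replace (INR k * (t + 2 * PI / INR k)) with (INR k * t + 2 * INR 1 * PI)
      by (simpl; field; lra).
    now rewrite cos_period.
  - intros t. replace (INR k * (2 * PI - t)) with (- (INR k * t) + 2 * INR k * PI) by ring.
    now rewrite cos_period, cos_neg.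
Qed.

Definition test_fun (eps : R) (m : nat) (x y : R) : R := eps * re_zpow (S m) x y.

Lemma test_fun_circle (eps : R) (m : nat) (t : R) :
  test_fun eps m (cos t) (sin t) = eps * cos (INR (S m) * t).
Proof. unfold test_fun. now rewrite (proj1 (zpow_circle (S m) t)). Qed.

Lemma test_fun_derive (eps : R) (m : nat) (x y : R) :
  is_derive (fun t => test_fun eps m t y) x (eps * (INR (S m) * re_zpow m x y)) /\
  is_derive (fun t => test_fun eps m x t) y (eps * (- (INR (S m) * im_zpow m x y))).
Proof. split; apply is_derive_scal; [apply (zpow_dx m x y) | apply (zpow_dy m x y)]. Qed.

Lemma test_fun_dx (eps : R) (m : nat) (x y : R) :
  dx (test_fun eps m) x y = eps * (INR (S m) * re_zpow m x y).
Proof. apply is_derive_unique, (test_fun_derive eps m x y). Qed.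

Lemma test_fun_dy (eps : R) (m : nat) (x y : R) :
  dy (test_fun eps m) x y = eps * (- (INR (S m) * im_zpow m x y)).
Proof. apply is_derive_unique, (test_fun_derive eps m x y). Qed.

Lemma test_fun_C1 (eps : R) (m : nat) : C1_plane (test_fun eps m).
Proof.
  intros x y. destruct (test_fun_derive eps m x y) as [Dx Dy]. repeat split.
  - eexists. exact Dx.
  - eexists. exact Dy.
  - apply (continuity_2d_pt_ext (fun u v => eps * (INR (S m) * re_zpow m u v)));
      [intros; symmetry; apply test_fun_dx|].
    repeat apply continuity_2d_pt_mult; try apply continuity_2d_pt_const. apply zpow_continuous.
  - apply (continuity_2d_pt_ext (fun u v => eps * (- (INR (S m) * im_zpow m u v))));
      [intros; symmetry; apply test_fun_dy|].
    apply continuity_2d_pt_mult; [apply continuity_2d_pt_const|]. apply continuity_2d_pt_opp.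
    apply continuity_2d_pt_mult; [apply continuity_2d_pt_const|]. apply zpow_continuous.
Qed.

(* |grad u|^2 = eps^2 (m+1)^2 |z|^(2m), whose integral over the disk is
   eps^2 (m+1) PI. *)
Lemma test_fun_dirichlet (eps : R) (m : nat) :
  dirichlet (test_fun eps m) = eps ^ 2 * INR (S m) * PI.
Proof.
  unfold dirichlet.
  rewrite (disk_int_ext _ (fun x y => eps ^ 2 * INR (S m) ^ 2 * (x ^ 2 + y ^ 2) ^ m)).
  - rewrite disk_int_radial_pow, S_INR. pose proof (pos_INR m). field. lra.
  - intros x y. rewrite test_fun_dx, test_fun_dy, <- zpow_norm. ring.
Qed.

Lemma test_fun_bmean (eps : R) (m : nat) : bmean (test_fun eps m) = 0.
Proof.
  unfold bmean, circ_int.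
  rewrite (RInt_ext_R _ (fun t => eps * cos (INR (S m) * t))) by (intros; apply test_fun_circle).
  rewrite RInt_scal_R, RInt_cos_period
    by (lia || (apply derivable_continuous_R; intros; auto_derive; auto)).
  ring.
Qed.

Lemma test_fun_admissible (eps : R) (m : nat) (p : R -> R -> R) :
  in_P0 m p -> circ_int (fun x y => exp (test_fun eps m x y) * p x y) = 0.
Proof.
  intros [Hpoly Hmean]. unfold circ_int in *.
  destruct (exp_cos_uncorrelated eps (S m) m p ltac:(lia) Hpoly) as [_ E].
  rewrite (RInt_ext_R _ (fun t => exp (eps * cos (INR (S m) * t)) * p (cos t) (sin t)))
    by (intros t; now rewrite test_fun_circle).
  rewrite E, Hmean. ring_R.
Qed.

Lemma test_fun_boundary_lower (eps : R) (m : nat) : 0 <= eps ->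
  1 + eps ^ 2 / 4 - eps ^ 3 / 6
  <= / (2 * PI) * circ_int (fun x y => exp (test_fun eps m x y - bmean (test_fun eps m))).
Proof.
  intros He. pose proof PI_RGT_0 as Hpi.
  rewrite test_fun_bmean. unfold circ_int.
  rewrite (RInt_ext_R _ (fun t => exp (eps * cos (INR (S m) * t))))
    by (intros; now rewrite Rminus_0_r, test_fun_circle).
  pose proof (RInt_exp_cos_lower (S m) eps ltac:(lia) He) as Hlow.
  apply Rmult_le_reg_l with (2 * PI); [lra|].
  rewrite <- Rmult_assoc, Rinv_r by lra. lra.
Qed.

Theorem mainTheorem16 (m : nat) (a : R) (ha : 0 < a)
  (H : forall u : R -> R -> R, C1_plane u ->
       (forall p, in_P0 m p -> circ_int (fun x y => exp (u x y) * p x y) = 0) ->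
       a * dirichlet u >=
         ln (/ (2 * PI) * circ_int (fun x y => exp (u x y - bmean u)))) :
  a >= / (4 * PI * (INR m + 1)).
Proof.
  pose proof PI_RGT_0 as Hpi. pose proof (pos_INR m) as Hm.
  (* Tested on u = test_fun eps m, the inequality becomes
     a (m+1) PI eps^2 >= ln (1 + eps^2/4 - eps^3/6). *)
  assert (Hq : a * PI * (INR m + 1) >= 1 / 4).
  { apply quarter_of_small_eps. intros eps He.
    specialize (H (test_fun eps m) (test_fun_C1 eps m) (test_fun_admissible eps m)).
    rewrite test_fun_dirichlet, S_INR in H.
    pose proof (test_fun_boundary_lower eps m ltac:(lra)) as Hlow.
    assert (Hcube : eps ^ 3 <= eps ^ 2) by (simpl; nra).
    assert (Hpos : 0 < 1 + eps ^ 2 / 4 - eps ^ 3 / 6) by (pose proof (pow2_ge_0 eps); lra).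
    assert (Hln := ln_le _ _ Hpos Hlow).
    replace (a * PI * (INR m + 1) * eps ^ 2) with (a * (eps ^ 2 * (INR m + 1) * PI)) by ring.
    lra. }
  apply Rle_ge.
  replace a with (a * PI * (INR m + 1) / (PI * (INR m + 1))) by (field; lra).
  replace (/ (4 * PI * (INR m + 1))) with (1 / 4 / (PI * (INR m + 1))) by (field; lra).
  apply Rmult_le_compat_r; [apply Rlt_le, Rinv_0_lt_compat; nra | lra].
Qed.
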